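(* Let $G$ be a graph of order $n$ with a clique partition $F=\{C_1,\dots,C_k\}$, where $s_i^F=|C_i|$ and $s_1^F\ge s_2^F\ge\cdots\ge s_k^F$, and let $P_G$ be the clique partition graph of $G$ with respect to $F$, with adjacency eigenvalues $\lambda_1(P_G)\ge\cdots\ge\lambda_k(P_G)$. Then $$\lambda_k(P_G)\ge -s_1^F.$$ Equality holds if all cliques in $F$ have size $s_1^F$ and $k>n$.
   Context: All graphs are finite and simple. A clique partition of $G$ is a set $F$ of cliques (sets of pairwise adjacent vertices) such that every edge lies in exactly one clique of $F$. The clique partition graph $P_G$ has vertex set $\{1,\dots,k\}$ (vertex $i$ corresponding to $C_i$), with $i\ne j$ adjacent iff $C_i\cap C_j\neq\emptyset$. *)

From HB Require Import structures.
From mathcomp Require Import all_boot all_order all_algebra.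
From mathcomp Require Import reals.
Set Implicit Arguments. Unset Strict Implicit. Unset Printing Implicit Defensive.
Import Order.TTheory GRing.Theory Num.Theory.

Definition simple_graph (V : finType) (adj : rel V) : Prop :=
  symmetric adj /\ irreflexive adj.

Definition is_clique (V : finType) (adj : rel V) (C : {set V}) : Prop :=
  forall x y, x \in C -> y \in C -> x != y -> adj x y.

Definition clique_partition (V : finType) (adj : rel V) (k : nat)
    (C : 'I_k -> {set V}) : Prop :=
  (forall i, is_clique adj (C i)) /\ injective C /\
  (forall x y, adj x y -> exists! i : 'I_k, (x \in C i) && (y \in C i)).

Definition cp_adj (R : nzRingType) (V : finType) (k : nat)
    (C : 'I_k -> {set V}) : 'M[R]_k :=
  \matrix_(i, j) (if (i != j) && (C i :&: C j != set0) then 1%R else 0%R).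

Definition s1 (V : finType) (k : nat) (C : 'I_k -> {set V}) : nat :=
  \max_(i < k) #|C i|.

From HB Require Import structures.
From mathcomp Require Import all_boot all_order all_algebra.
From mathcomp Require Import reals lra.
Import Order.TTheory GRing.Theory Num.Theory.
Set Implicit Arguments. Unset Strict Implicit. Unset Printing Implicit Defensive.
Local Open Scope ring_scope.

(* Let M be the k x n clique-vertex incidence matrix. Two distinct cliques of a
   clique partition share at most one vertex (a shared edge would lie in both),
   so A(P_G) = M M^T - D with D = diag(|C_1|, ..., |C_k|). Since M M^T is
   positive semidefinite and D <= s_1 I, the Rayleigh quotient of A(P_G) is at
   least -s_1. If D = s_1 I and k > n, a nonzero v with v M = 0 exists and is an
   eigenvector for -s_1. *)

Section GramForms.
Variable R : realDomainType.

Lemma dotmx_self_ge0 n (u : 'rV[R]_n) : 0 <= (u *m u^T) 0 0.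
Proof. by rewrite mxE; apply: sumr_ge0 => i _; rewrite mxE -expr2 sqr_ge0. Qed.

Lemma dotmx_self_gt0 n (u : 'rV[R]_n) : u != 0 -> 0 < (u *m u^T) 0 0.
Proof.
move=> u0; rewrite lt0r dotmx_self_ge0 andbT mxE.
have sq_ge0 i : 0 <= u 0 i * u^T i 0 by rewrite mxE -expr2 sqr_ge0.
apply: contra u0 => /eqP/(psumr_eq0P (fun i _ => sq_ge0 i)) sq_eq0.
apply/eqP/rowP => i; apply/eqP; rewrite mxE -sqrf_eq0.
by have := sq_eq0 i isT; rewrite mxE -expr2 => ->.
Qed.

Lemma diag_form_le n (d : 'rV[R]_n) (s : R) (v : 'rV[R]_n) :
  (forall i, d 0 i <= s) -> (v *m diag_mx d *m v^T) 0 0 <= s * (v *m v^T) 0 0.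
Proof.
move=> d_le_s; rewrite mul_mx_diag !mxE mulr_sumr; apply: ler_sum => i _.
by rewrite !mxE mulrAC -expr2 mulrC ler_wpM2r ?sqr_ge0.
Qed.

End GramForms.

Lemma eigenvalue_gram_sub_diag_ge (R : realFieldType) k n (M : 'M[R]_(k, n))
    (d : 'rV[R]_k) (s a : R) :
  (forall i, d 0 i <= s) -> eigenvalue (M *m M^T - diag_mx d) a -> - s <= a.
Proof.
move=> d_le_s /eigenvalueP [v v_eig v0].
have form_eq : a * (v *m v^T) 0 0
    = ((v *m M) *m (v *m M)^T) 0 0 - (v *m diag_mx d *m v^T) 0 0.
  transitivity ((v *m (M *m M^T - diag_mx d) *m v^T) 0 0).
    by rewrite v_eig -scalemxAl [RHS]mxE.
  by rewrite mulmxBr mulmxBl mxE [X in _ + X]mxE trmx_mul !mulmxA.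
have : 0 <= (a + s) * (v *m v^T) 0 0.
  rewrite mulrDl form_eq.
  by have := dotmx_self_ge0 (v *m M); have := diag_form_le v d_le_s; lra.
by rewrite pmulr_lge0 ?dotmx_self_gt0 // -lerBlDr sub0r.
Qed.

Lemma eigenvalue_gram_sub_scalar (F : fieldType) k n (M : 'M[F]_(k, n)) (s : F) :
  (n < k)%N -> eigenvalue (M *m M^T - s%:M) (- s).
Proof.
move=> n_lt_k; have : kermx M != 0.
  by rewrite -mxrank_eq0 mxrank_ker subn_eq0 -ltnNge (leq_ltn_trans (rank_leq_col M)).
case/rowV0Pn => v /sub_kermxP vM v0; apply/eigenvalueP; exists v => //.
by rewrite mulmxBr mulmxA vM mul0mx sub0r mul_mx_scalar scaleNr.
Qed.

Section Incidence.
Variables (V : finType) (k : nat) (C : 'I_k -> {set V}).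

Definition incidence_mx (R : nzRingType) : 'M[R]_(k, #|V|) :=
  \matrix_(i, l) (enum_val l \in C i)%:R.

Lemma incidence_gramE (R : nzRingType) i j :
  (incidence_mx R *m (incidence_mx R)^T) i j = #|C i :&: C j|%:R.
Proof.
rewrite mxE.
under eq_bigr => l _ do rewrite !mxE -natrM mulnb -in_setI.
rewrite -(big_enum_val (fun x => (x \in C i :&: C j)%:R)) /=.
rewrite -sumr_const [RHS]big_mkcond; apply: eq_bigr => x _.
by case: (x \in _).
Qed.

Lemma cp_adj_incidenceE (R : nzRingType) :
  (forall i j, i != j -> #|C i :&: C j| <= 1)%N ->
  cp_adj R C = incidence_mx R *m (incidence_mx R)^T - diag_mx (\row_i #|C i|%:R).
Proof.
move=> meet_le1; apply/matrixP => i j; rewrite [RHS]mxE incidence_gramE !mxE.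
have [<-|ij] := eqVneq i j; first by rewrite setIid mulr1n subrr.
rewrite mulr0n subr0 -card_gt0.
by case: #|_| (meet_le1 i j ij) => [|[]].
Qed.

Lemma clique_partition_meet_le1 (adj : rel V) :
  clique_partition adj C -> forall i j, i != j -> (#|C i :&: C j| <= 1)%N.
Proof.
move=> [clique_C [_ edge_in_unique]] i j ij; apply/card_le1_eqP => x y.
rewrite !inE => /andP[xi xj] /andP[yi yj]; apply/eqP; apply: contraNT ij => xy.
have [l [_ l_unique]] := edge_in_unique y x (clique_C i y x yi xi xy).
by rewrite -(l_unique i) ?xi ?yi // (l_unique j) ?xj ?yj.
Qed.

End Incidence.

Theorem mainTheorem6 (R : realType) (V : finType) (adj : rel V) (k : nat)
    (C : 'I_k -> {set V}) :
  simple_graph adj ->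
  clique_partition adj C ->
  (forall i j : 'I_k, (i <= j)%N -> (#|C j| <= #|C i|)%N) ->
  (forall a : R, eigenvalue (cp_adj R C) a -> - (s1 C)%:R <= a) /\
  ((forall i, #|C i| = s1 C) -> (#|V| < k)%N ->
     eigenvalue (cp_adj R C) (- (s1 C)%:R)).
Proof.
move=> _ C_part _.
rewrite (cp_adj_incidenceE R (clique_partition_meet_le1 C_part)); split.
  move=> a; apply: eigenvalue_gram_sub_diag_ge => i.
  by rewrite mxE ler_nat leq_bigmax.
move=> C_size V_lt_k.
have -> : diag_mx (\row_i #|C i|%:R) = (s1 C)%:R%:M :> 'M[R]_k.
  by apply/matrixP => i j; rewrite !mxE C_size.
exact: eigenvalue_gram_sub_scalar.
Qed.
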